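(* For all positive integers $m,n,t,a$ with $m+n=t$, we have $\mathcal{F}(a,t)<\mathcal{F}(a,m,n)$.
   Context: $\mathcal{F}$ is defined on finite tuples of positive integers recursively: $\mathcal{F}(a)=1$ for every positive integer $a$; for $s\ge2$, $\mathcal{F}(a_1,\dots,a_s)=\sum_{i=1}^s\mathcal{F}(a_1,\dots,a_{i-1},a_i-1,a_{i+1},\dots,a_s)$, where a tuple with a zero entry is reduced by: $\mathcal{F}(0,a_2,\dots,a_t)=\mathcal{F}(a_2,\dots,a_t)$, $\mathcal{F}(a_1,\dots,a_t,0)=\mathcal{F}(a_1,\dots,a_t)$, and $\mathcal{F}(a_1,\dots,a_r,0,a_{r+2},\dots,a_s)=\mathcal{F}(a_1,\dots,a_{r-1},a_r+a_{r+2},a_{r+3},\dots,a_s)$. *)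

From mathcomp Require Import all_boot.
Set Implicit Arguments. Unset Strict Implicit. Unset Printing Implicit Defensive.

(* [reduce0 pre post]: the reduction of the tuple pre ++ [0] ++ post,
   following the paper's rules:
   F(0,a_2,..,a_t) = F(a_2,..,a_t); F(a_1,..,a_t,0) = F(a_1,..,a_t);
   F(a_1,..,a_r,0,a_{r+2},..,a_s) = F(a_1,..,a_{r-1},a_r+a_{r+2},a_{r+3},..,a_s). *)
Definition reduce0 (pre post : seq nat) : seq nat :=
  match pre, post with
  | [::], _ => post
  | _, [::] => pre
  | x :: pre', y :: post' => belast x pre' ++ (last x pre' + y) :: post'
  end.

Definition dec_at (i : nat) (l : seq nat) : seq nat :=
  let pre := take i l in
  let x := nth 0 l i in
  let post := drop i.+1 l in
  if x.-1 == 0 then reduce0 pre post else pre ++ x.-1 :: post.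

Fixpoint Ffuel (k : nat) (l : seq nat) : nat :=
  match k with
  | 0 => 0
  | k'.+1 =>
      match l with
      | [:: _] => 1
      | _ => \sum_(0 <= i < size l) Ffuel k' (dec_at i l)
      end
  end.

(* F(a_1,...,a_s), for positive entries: every recursive step lowers the
   entry sum by exactly one, so fuel = sum of the entries suffices. *)
Definition F (l : seq nat) : nat := Ffuel (sumn l) l.

(* Every step of the recursion lowers the entry sum by one, so on tuples of
   positive integers the fuel never runs out and F obeys its defining
   recurrence.  For pairs the recurrence is Pascal's rule, whence
   F(a,b) = C(a+b,a).  For triples, F(a,m,n) = F(a-1,m,n) + F(a,m-1,n) +
   F(a,m,n-1) dominates Pascal's rule C(a+m+n,a) = C(a+m+n-1,a-1) +
   C(a+m+n-1,a) term by term (the boundary reductions F(m,n) >= 1 and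
   F(a,m) = C(a+m,a) included), and the middle term is positive; so by
   induction on a+m+n, F(a,m,n) > C(a+m+n,a) = F(a,m+n). *)

From mathcomp Require Import all_boot zify.

Lemma sumn_reduce0 pre post : sumn (reduce0 pre post) = sumn pre + sumn post.
Proof.
case: pre post => [|x pre] [|y post] //=; first by rewrite addn0.
have sumn_last : sumn (belast x pre) + last x pre = x + sumn pre.
  by rewrite -sumn_rcons -lastI.
by rewrite sumn_cat /=; lia.
Qed.

Lemma sumn_dec_at i l : i < size l -> 0 < nth 0 l i ->
  sumn (dec_at i l) = (sumn l).-1.
Proof.
move=> lt_i_l nth_gt0.
have sumnE : sumn l = sumn (take i l) + nth 0 l i + sumn (drop i.+1 l).
  by rewrite -{1}(cat_take_drop i l) (drop_nth 0 lt_i_l) sumn_cat /= addnA.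
rewrite /dec_at sumnE; case: eqP => [x0|_].
  by rewrite sumn_reduce0; lia.
by rewrite sumn_cat /=; lia.
Qed.

Lemma F_rec l : 0 \notin l -> 1 < size l ->
  F l = \sum_(0 <= i < size l) F (dec_at i l).
Proof.
move=> l_pos size_l.
have [k sumn_l] : exists k, sumn l = k.+1.
  case: l l_pos size_l => [|x l] //=; rewrite inE negb_or => /andP[x_pos _] _.
  by exists (x.-1 + sumn l); lia.
rewrite /F sumn_l /=.
case: l l_pos size_l sumn_l => [|x [|y l]] // l_pos _ sumn_l.
apply: eq_big_nat => i /andP[_ lt_i_l].
rewrite sumn_dec_at // ?sumn_l //.
by rewrite lt0n; apply: contraNneq l_pos => <-; exact: mem_nth.
Qed.

Lemma F_pair_rec a b : F [:: a.+1; b.+1] =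
  (if a is a'.+1 then F [:: a; b.+1] else 1) +
  (if b is b'.+1 then F [:: a.+1; b] else 1).
Proof. by rewrite F_rec // !big_nat_recl // big_geq // addn0; case: a; case: b. Qed.

Lemma F_triple_rec a m n : F [:: a.+1; m.+1; n.+1] =
  (if a is a'.+1 then F [:: a; m.+1; n.+1] else F [:: m.+1; n.+1]) +
  (if m is m'.+1 then F [:: a.+1; m; n.+1] else F [:: a.+1 + n.+1]) +
  (if n is n'.+1 then F [:: a.+1; m.+1; n] else F [:: a.+1; m.+1]).
Proof.
by rewrite F_rec // !big_nat_recl // big_geq // addn0 addnA; case: a; case: m; case: n.
Qed.

Lemma F_pair a b : F [:: a.+1; b.+1] = 'C(a.+1 + b.+1, a.+1).
Proof.
elim: a b => [|a IHa]; elim=> [|b IHb]; rewrite F_pair_rec //.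
- by rewrite IHb !bin1.
- by rewrite IHa !addn1 !binSn.
- by rewrite IHa IHb [a.+2 + b.+1]addSnnS [a.+2 + _]addSn binS addnC.
Qed.

Lemma binom_lt_F_triple a m n :
  'C(a.+1 + m.+1 + n.+1, a.+1) < F [:: a.+1; m.+1; n.+1].
Proof.
have [s] := ubnP (a + m + n); elim: s a m n => // s IH a m n lt_amn_s.
have {lt_amn_s}IH a' m' n' : a' + m' + n' < a + m + n ->
    'C(a'.+1 + m'.+1 + n'.+1, a'.+1) < F [:: a'.+1; m'.+1; n'.+1].
  by move=> lt_amn; apply: IH; lia.
have -> : a.+1 + m.+1 + n.+1 = (a + m.+1 + n.+1).+1 by rewrite !addSn.
rewrite F_triple_rec binS addnC -addnS -[leqRHS]addnA; apply: leq_add.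
- case: a => [|a] in IH *; first by rewrite bin0 F_pair bin_gt0 leq_addr.
  by apply/ltnW; apply: IH; lia.
- rewrite -add1n; apply: leq_add.
  + case: m => [|m] in IH *; first by rewrite addSn.
    by apply: leq_ltn_trans (IH a m n _); lia.
  + case: n => [|n] in IH *; first by rewrite F_pair addn1 addSn.
    have -> : a + m.+1 + n.+2 = a.+1 + m.+1 + n.+1 by rewrite !addSn !addnS.
    by apply/ltnW; apply: IH; lia.
Qed.

Theorem proposition4 (m n t a : nat) :
  0 < m -> 0 < n -> 0 < t -> 0 < a -> m + n = t ->
  F [:: a; t] < F [:: a; m; n].
Proof.
case: m n t a => [|m] [|n] [|t] [|a] // _ _ _ _ sum_mn.
by rewrite F_pair -sum_mn addnA binom_lt_F_triple.
Qed.
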